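(* Consider a linearly separable training set $\{(\mathbf{x}_i,y_i)\}_{i=1}^N$, $\mathbf{x}_i\in\mathbb{R}^n$, $y_i\in\{-1,1\}$, whose maximum-margin separating hyperplane passes through the origin, and train a linear model with learnable bias by gradient descent (small step size $\eta$, approximated by gradient flow) on the exponential loss $\mathcal{L}(\mathbf{w},b)=\sum_{i=1}^N e^{-y_i(\mathbf{w}^T\mathbf{x}_i+b)}$. Suppose the weight iterates satisfy $\mathbf{w}(t)=\hat{\mathbf{w}}\log t+\boldsymbol\rho(t)$ with $\|\boldsymbol\rho(t)\|$ bounded and $\boldsymbol\rho(t)\to\tilde{\mathbf{w}}$, where $\hat{\mathbf{w}}$ is the hard-margin SVM weight vector (so $y_i\hat{\mathbf{w}}^T\mathbf{x}_i=1$ on support vectors), the support vectors span the dataset, $\hat{\mathbf{w}}=\sum_{i\in\mathcal{S}}\alpha_i\mathbf{x}_{s,i}$, and $\tilde{\mathbf{w}}$ satisfies $\eta\exp(-\mathbf{x}_{s,i}^T\tilde{\mathbf{w}})=\alpha_i$ for each support vector. Let $\mathcal{S}^+$, $\mathcal{S}^-$ be the support vectors of class $+1$ and $-1$ respectively, and define $A_S^+=\sum_{i\in\mathcal{S}^+}\exp(-\tilde{\mathbf{w}}^T\mathbf{x}_i)$, $A_S^-=\sum_{i\in\mathcal{S}^-}\exp(\tilde{\mathbf{w}}^T\mathbf{x}_i)$, $\delta=\sqrt{A_S^-/A_S^+}$, and $g(t)=2\sqrt{A_S^+A_S^-}\log(t/t_0)$, where $t_0$ is a constant (the time at which the late-time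 dynamics begin). If the bias is initialized at $0$, then the late-time gradient flow dynamics of the bias follow $$\frac{db}{dt}=\frac{1}{t}\left(A_S^+e^{-b}-A_S^-e^{b}\right),$$ and integrating, $$b(t)=\log\left(\frac{(1+\delta)\exp(g(t))-(1-\delta)}{(1+\delta)\exp(g(t))+(1-\delta)}\right)-\log\delta .$$ Consequently $b(t)$ converges to $b_\infty=-\log\delta$.
   Context: Support vectors are the training points $\mathbf{x}_{s,i}$ with $y_i(\mathbf{w}_{SVM}^T\mathbf{x}_i+b_{SVM})=1$, where $(\mathbf{w}_{SVM},b_{SVM})$ is the minimum-norm solution of $y_i(\mathbf{w}^T\mathbf{x}_i+b)\ge 1$ for all $i$; by assumption $b_{SVM}=0$. ''Late-time dynamics'' refers to times $t\ge t_0$ at which $\boldsymbol\rho(t)$ may be replaced by its limit $\tilde{\mathbf{w}}$ and only support vectors contribute to the loss gradient. *)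

From Stdlib Require Import Reals.
From Coquelicot Require Import Coquelicot.
Open Scope R_scope.

Fixpoint sumR (n : nat) (f : nat -> R) : R :=
  match n with
  | O => 0
  | S m => sumR m f + f m
  end.

(* Vectors of R^n are represented as functions nat -> R (only coordinates
   0..n-1 matter). *)
Definition dot (n : nat) (u v : nat -> R) : R := sumR n (fun k => u k * v k).
Definition sqnorm (n : nat) (u : nat -> R) : R := dot n u u.

Definition hm_feasible (n N : nat) (x : nat -> nat -> R) (y : nat -> R)
  (w : nat -> R) (b : R) : Prop :=
  forall i, (i < N)%nat -> y i * (dot n w (x i) + b) >= 1.

Definition hard_margin_svm_bias0 (n N : nat) (x : nat -> nat -> R) (y : nat -> R)
  (what : nat -> R) : Prop :=
  hm_feasible n N x y what 0 /\
  forall w b, hm_feasible n N x y w b -> sqnorm n what <= sqnorm n w.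

Definition is_support (n : nat) (x : nat -> nat -> R) (y : nat -> R)
  (what : nat -> R) (i : nat) : bool :=
  if Req_EM_T (y i * dot n what (x i)) 1 then true else false.

Definition is_label (y : R) (c : R) : bool :=
  if Req_EM_T y c then true else false.

Definition A_plus (n N : nat) (x : nat -> nat -> R) (y : nat -> R)
  (what wtil : nat -> R) : R :=
  sumR N (fun i => if andb (is_support n x y what i) (is_label (y i) 1)
                   then exp (- dot n wtil (x i)) else 0).

Definition A_minus (n N : nat) (x : nat -> nat -> R) (y : nat -> R)
  (what wtil : nat -> R) : R :=
  sumR N (fun i => if andb (is_support n x y what i) (is_label (y i) (-1))
                   then exp (dot n wtil (x i)) else 0).

(* Late-time gradient-flow velocity of the bias: -dL/db where
   L(w,b) = sum_i exp(-y_i (w^T x_i + b)), with w(t) = what log t + wtil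
   (rho(t) replaced by its limit wtil) and only support vectors kept. *)
Definition late_bias_velocity (n N : nat) (x : nat -> nat -> R) (y : nat -> R)
  (what wtil : nat -> R) (t bt : R) : R :=
  sumR N (fun i => if is_support n x y what i
                   then y i * exp (- y i * (dot n (fun k => what k * ln t + wtil k) (x i) + bt))
                   else 0).

(** The bias obeys a scalar Riccati-type equation once the weights are frozen
    at [what log t + wtil]: on a support vector [y_i what^T x_i = 1], so its loss
    term decays exactly like [1/t], and summing over the two classes gives
    [b' = (A^+ e^-b - A^- e^b) / t].  Both classes contain a support vector
    (otherwise shrinking [what] and shifting the bias would give a shorter
    feasible classifier), so [A^+, A^- > 0].  With [u = delta e^b] and
    [g' = 2 sqrt(A^+ A^-) / t] the equation reads [u' = g' (1 - u^2) / 2], whose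
    first integral [(1 - u) / (1 + u) * e^g] is constant; solving for [u] gives
    the closed form, and [g -> +oo] gives the limit. *)

From Stdlib Require Import Reals Lra Lia Classical.
From Coquelicot Require Import Coquelicot.
Open Scope R_scope.

Lemma sumR_ext n f g :
  (forall k, (k < n)%nat -> f k = g k) -> sumR n f = sumR n g.
Proof.
  induction n as [|n IH]; simpl; intros Hfg; [reflexivity|].
  rewrite IH by (intros; apply Hfg; lia).
  rewrite Hfg by lia. reflexivity.
Qed.

Lemma sumR_plus n f g : sumR n (fun k => f k + g k) = sumR n f + sumR n g.
Proof. induction n as [|n IH]; simpl; [lra|]. rewrite IH; ring. Qed.

Lemma sumR_minus n f g : sumR n (fun k => f k - g k) = sumR n f - sumR n g.
Proof. induction n as [|n IH]; simpl; [lra|]. rewrite IH; ring. Qed.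

Lemma sumR_scal_l n c f : sumR n (fun k => c * f k) = c * sumR n f.
Proof. induction n as [|n IH]; simpl; [lra|]. rewrite IH; ring. Qed.

Lemma sumR_scal_r n c f : sumR n (fun k => f k * c) = sumR n f * c.
Proof. induction n as [|n IH]; simpl; [lra|]. rewrite IH; ring. Qed.

Lemma sumR_nonneg n f :
  (forall k, (k < n)%nat -> 0 <= f k) -> 0 <= sumR n f.
Proof.
  induction n as [|n IH]; simpl; intros Hf; [lra|].
  assert (0 <= sumR n f) by (apply IH; intros; apply Hf; lia).
  assert (0 <= f n) by (apply Hf; lia).
  lra.
Qed.

Lemma sumR_pos n f i :
  (forall k, (k < n)%nat -> 0 <= f k) -> (i < n)%nat -> 0 < f i -> 0 < sumR n f.
Proof.
  induction n as [|n IH]; simpl; intros Hf Hi Hfi; [lia|].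
  assert (0 <= f n) by (apply Hf; lia).
  destruct (Nat.eq_dec i n) as [->|Hin].
  - assert (0 <= sumR n f) by (apply sumR_nonneg; intros; apply Hf; lia). lra.
  - assert (0 < sumR n f) by (apply IH; [intros; apply Hf; lia | lia | exact Hfi]). lra.
Qed.

Lemma dot_scal_l n a u v : dot n (fun k => a * u k) v = a * dot n u v.
Proof.
  unfold dot. rewrite <- sumR_scal_l. apply sumR_ext; intros; ring.
Qed.

Lemma dot_scal_add_l n a u v z :
  dot n (fun k => u k * a + v k) z = dot n u z * a + dot n v z.
Proof.
  unfold dot. rewrite <- sumR_scal_r, <- sumR_plus. apply sumR_ext; intros; ring.
Qed.

Lemma sqnorm_scal n a u : sqnorm n (fun k => a * u k) = a * a * sqnorm n u.
Proof.
  unfold sqnorm, dot. rewrite <- sumR_scal_l. apply sumR_ext; intros; ring.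
Qed.

Lemma sqnorm_nonneg n u : 0 <= sqnorm n u.
Proof. apply sumR_nonneg; intros; nra. Qed.

Lemma sqnorm_eq0_dot n u v : sqnorm n u = 0 -> dot n u v = 0.
Proof.
  unfold sqnorm, dot.
  induction n as [|n IH]; simpl; intros Hu; [reflexivity|].
  assert (0 <= sumR n (fun k => u k * u k)) by (apply sumR_nonneg; intros; nra).
  assert (Hun : u n = 0) by nra.
  rewrite IH, Hun by nra; ring.
Qed.

Lemma finite_min_above (N : nat) (P : nat -> Prop) (h : nat -> R) (a : R) :
  (forall i, (i < N)%nat -> P i -> a < h i) ->
  exists m, a < m /\ forall i, (i < N)%nat -> P i -> m <= h i.
Proof.
  induction N as [|N IH]; intros Hh.
  - exists (a + 1). split; [lra | intros; lia].
  - destruct IH as [m [Ham Hm]]; [intros; apply Hh; auto; lia|].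
    destruct (classic (P N)) as [HPN|HPN].
    + assert (a < h N) by (apply Hh; auto).
      exists (Rmin m (h N)). split; [apply Rmin_case; lra|].
      intros i Hi HPi. destruct (Nat.eq_dec i N) as [->|HiN]; [apply Rmin_r|].
      eapply Rle_trans; [apply Rmin_l | apply Hm; auto; lia].
    + exists m. split; [exact Ham|].
      intros i Hi HPi. destruct (Nat.eq_dec i N) as [->|HiN]; [tauto|].
      apply Hm; auto; lia.
Qed.

Section HardMarginSVM.

Variables (n N : nat) (x : nat -> nat -> R) (y : nat -> R).
Hypothesis labels : forall i, (i < N)%nat -> y i = 1 \/ y i = -1.

Lemma hm_feasible_sqnorm_pos w :
  (0 < N)%nat -> hm_feasible n N x y w 0 -> 0 < sqnorm n w.
Proof.
  intros HN Hw.
  destruct (sqnorm_nonneg n w) as [Hpos|Hzero]; [exact Hpos|].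
  specialize (Hw 0%nat HN).
  rewrite (sqnorm_eq0_dot n w (x 0%nat)) in Hw by auto. lra.
Qed.

Lemma hm_feasible_shrink w sg m :
  (sg = 1 \/ sg = -1) -> 1 < m ->
  hm_feasible n N x y w 0 ->
  (forall i, (i < N)%nat -> y i = sg -> m <= y i * dot n w (x i)) ->
  hm_feasible n N x y (fun k => 2 / (m + 1) * w k) (sg * (2 / (m + 1) - 1)).
Proof.
  intros Hsg Hm Hw Hgap i Hi.
  set (c := 2 / (m + 1)).
  assert (Hc0 : 0 < c) by (unfold c; apply Rdiv_lt_0_compat; lra).
  assert (Hcm : c * (m + 1) = 2) by (unfold c; field; lra).
  rewrite dot_scal_l.
  specialize (Hw i Hi). rewrite Rplus_0_r in Hw.
  replace (y i * (c * dot n w (x i) + sg * (c - 1)))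
    with (c * (y i * dot n w (x i)) + y i * sg * (c - 1)) by ring.
  destruct (Req_dec (y i) sg) as [Hsame|Hother].
  - assert (Hmi := Hgap i Hi Hsame).
    assert (y i * sg = 1) by (rewrite Hsame; destruct Hsg as [-> | ->]; lra).
    nra.
  - assert (y i * sg = -1)
      by (destruct (labels i Hi) as [Hy|Hy], Hsg as [-> | ->]; rewrite Hy in *; lra).
    nra.
Qed.

Lemma hard_margin_svm_support_of_label what sg :
  (0 < N)%nat -> hard_margin_svm_bias0 n N x y what -> (sg = 1 \/ sg = -1) ->
  exists i, (i < N)%nat /\ y i = sg /\ y i * dot n what (x i) = 1.
Proof.
  intros HN [Hfeas Hmin] Hsg.
  apply NNPP; intros Hnone.
  destruct (finite_min_above N (fun i => y i = sg) (fun i => y i * dot n what (x i)) 1)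
    as [m [Hm Hgap]].
  { intros i Hi Hyi.
    assert (Hge := Hfeas i Hi). rewrite Rplus_0_r in Hge.
    destruct (Req_dec (y i * dot n what (x i)) 1) as [Hsv|Hsv]; [|lra].
    exfalso; apply Hnone; eauto. }
  assert (Hshorter := Hmin _ _ (hm_feasible_shrink what sg m Hsg Hm Hfeas Hgap)).
  rewrite sqnorm_scal in Hshorter.
  assert (0 < sqnorm n what) by exact (hm_feasible_sqnorm_pos what HN Hfeas).
  set (c := 2 / (m + 1)) in Hshorter.
  assert (c < 1) by (apply Rmult_lt_reg_r with (m + 1); [lra|]; unfold c; field_simplify; lra).
  assert (0 < c) by (apply Rdiv_lt_0_compat; lra).
  assert (c * c < 1) by nra.
  nra.
Qed.

Lemma is_support_true what i :
  y i * dot n what (x i) = 1 -> is_support n x y what i = true.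
Proof.
  unfold is_support. destruct Req_EM_T; [reflexivity | contradiction].
Qed.

Lemma is_label_same c : is_label c c = true.
Proof. unfold is_label. destruct Req_EM_T; [reflexivity | contradiction]. Qed.

Lemma is_label_other c d : c <> d -> is_label c d = false.
Proof. unfold is_label. destruct Req_EM_T; [contradiction | reflexivity]. Qed.

Lemma A_plus_pos what wtil :
  (0 < N)%nat -> hard_margin_svm_bias0 n N x y what -> 0 < A_plus n N x y what wtil.
Proof.
  intros HN Hsvm.
  destruct (hard_margin_svm_support_of_label what 1 HN Hsvm) as [i [Hi [Hyi Hsv]]];
    [now left|].
  apply sumR_pos with i; [| exact Hi |].
  - intros k _. destruct andb; [apply Rlt_le, exp_pos | lra].
  - rewrite is_support_true, Hyi, is_label_same by exact Hsv. apply exp_pos.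
Qed.

Lemma A_minus_pos what wtil :
  (0 < N)%nat -> hard_margin_svm_bias0 n N x y what -> 0 < A_minus n N x y what wtil.
Proof.
  intros HN Hsvm.
  destruct (hard_margin_svm_support_of_label what (-1) HN Hsvm) as [i [Hi [Hyi Hsv]]];
    [now right|].
  apply sumR_pos with i; [| exact Hi |].
  - intros k _. destruct andb; [apply Rlt_le, exp_pos | lra].
  - rewrite is_support_true, Hyi, is_label_same by exact Hsv. apply exp_pos.
Qed.

Lemma exp_support_term yi D W bt t :
  0 < t -> yi * D = 1 ->
  exp (- yi * (D * ln t + W + bt)) = / t * exp (- yi * (W + bt)).
Proof.
  intros Ht HD.
  replace (- yi * (D * ln t + W + bt)) with (- ln t + - yi * (W + bt))
    by (transitivity (- (yi * D) * ln t + - yi * (W + bt)); [rewrite HD; ring | ring]).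
  rewrite exp_plus, exp_Ropp, exp_ln by exact Ht. reflexivity.
Qed.

Lemma late_bias_velocity_eq what wtil t bt :
  0 < t ->
  late_bias_velocity n N x y what wtil t bt =
  / t * (A_plus n N x y what wtil * exp (- bt) - A_minus n N x y what wtil * exp bt).
Proof.
  intros Ht. unfold late_bias_velocity, A_plus, A_minus.
  rewrite <- !sumR_scal_r, <- sumR_minus, <- sumR_scal_l.
  apply sumR_ext; intros i Hi.
  unfold is_support.
  destruct (Req_EM_T (y i * dot n what (x i)) 1) as [Hsv|Hsv]; simpl; [|ring].
  rewrite dot_scal_add_l, exp_support_term by assumption.
  set (W := dot n wtil (x i)).
  destruct (labels i Hi) as [Hy|Hy]; rewrite Hy, is_label_same, is_label_other by lra; simpl.
  - replace (- (1) * (W + bt)) with (- W + - bt) by ring. rewrite exp_plus. ring.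
  - replace (- (-1) * (W + bt)) with (W + bt) by ring. rewrite exp_plus. ring.
Qed.

End HardMarginSVM.

Lemma ex_derive_continuity_pt (f : R -> R) z : ex_derive f z -> continuity_pt f z.
Proof.
  intros Hf.
  apply continuity_pt_filterlim, (ex_derive_continuous (K := R_AbsRing) (V := R_NormedModule)), Hf.
Qed.

Lemma is_derive_0_const_from (f : R -> R) (a : R) :
  (forall t, a <= t -> is_derive f t 0) -> forall t, a <= t -> f t = f a.
Proof.
  intros Hf t [Hat|<-]; [|reflexivity].
  destruct (MVT_gen f a t (fun _ => 0)) as [c [_ Hc]].
  - intros z Hz. apply Hf. rewrite Rmin_left in Hz; lra.
  - intros z Hz. apply ex_derive_continuity_pt.
    exists 0. apply Hf. rewrite Rmin_left in Hz; lra.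
  - lra.
Qed.

Lemma is_lim_scal_ln_ratio c t0 :
  0 < c -> 0 < t0 -> is_lim (fun t => c * ln (t / t0)) p_infty p_infty.
Proof.
  intros Hc Ht0.
  replace p_infty with (Rbar_mult c p_infty) at 2
    by (simpl; destruct Rle_dec; [destruct Rle_lt_or_eq_dec|]; auto; lra).
  apply is_lim_scal_l, (is_lim_comp ln (fun t => t / t0) p_infty p_infty p_infty).
  - exact is_lim_ln_p.
  - replace p_infty with (Rbar_mult p_infty (/ t0)) at 2.
    + apply is_lim_scal_r, is_lim_id.
    + assert (0 < / t0) by (apply Rinv_0_lt_compat; exact Ht0).
      simpl. destruct Rle_dec; [destruct Rle_lt_or_eq_dec|]; auto; lra.
  - exists 0. intros t _ Hinf. discriminate.
Qed.

Lemma first_integral_solve d u G :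
  0 < d -> 0 < u -> 1 <= G ->
  (1 - u) / (1 + u) * G = (1 - d) / (1 + d) ->
  u = ((1 + d) * G - (1 - d)) / ((1 + d) * G + (1 - d)).
Proof.
  intros Hd Hu HG Hinv.
  assert (Hcross : (1 - u) * G * (1 + d) = (1 - d) * (1 + u)).
  { replace ((1 - u) * G * (1 + d)) with ((1 - u) / (1 + u) * G * (1 + u) * (1 + d))
      by (field; lra).
    rewrite Hinv. field. lra. }
  apply Rmult_eq_reg_r with ((1 + d) * G + (1 - d)); [|nra].
  field_simplify; [nra | nra].
Qed.

Section BiasODE.

Variables (Ap Am t0 : R) (b : R -> R).
Hypotheses (Ap_pos : 0 < Ap) (Am_pos : 0 < Am) (t0_pos : 0 < t0) (b_t0 : b t0 = 0).
Hypothesis b_derive :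
  forall t, t0 <= t -> is_derive b t (/ t * (Ap * exp (- b t) - Am * exp (b t))).

Local Notation delta := (sqrt (Am / Ap)).
Local Notation g t := (2 * sqrt (Ap * Am) * ln (t / t0)).

Lemma delta_pos : 0 < delta.
Proof. apply sqrt_lt_R0, Rdiv_lt_0_compat; assumption. Qed.

Lemma Am_eq : Am = Ap * (delta * delta).
Proof. rewrite sqrt_sqrt by (apply Rlt_le, Rdiv_lt_0_compat; assumption). field; lra. Qed.

Lemma sqrt_Ap_Am : sqrt (Ap * Am) = Ap * delta.
Proof.
  replace (Ap * Am) with (Ap * Ap * (Am / Ap)) by (field; lra).
  rewrite sqrt_mult_alt, sqrt_square by nra. reflexivity.
Qed.

Lemma exp_g_ge1 t : t0 <= t -> 1 <= exp (g t).
Proof.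
  intros Ht. assert (Hexp := exp_ineq1_le (g t)).
  assert (0 < sqrt (Ap * Am)) by (apply sqrt_lt_R0; nra).
  assert (0 <= ln (t / t0)).
  { rewrite <- ln_1. apply ln_le; [lra|].
    apply Rmult_le_reg_r with t0; [lra|]. field_simplify; lra. }
  nra.
Qed.

Let first_integral t :=
  (1 - delta * exp (b t)) / (1 + delta * exp (b t)) * exp (g t).

Lemma first_integral_derive t : t0 <= t -> is_derive first_integral t 0.
Proof.
  intros Ht. assert (delta_pos := delta_pos).
  assert (0 < exp (b t)) by apply exp_pos.
  assert (Hb : ex_derive b t) by (eexists; apply b_derive, Ht).
  unfold first_integral. auto_derive.
  - repeat split; try exact Hb.
    + apply Rgt_not_eq. nra.
    + apply Rmult_lt_0_compat; [lra | apply Rinv_0_lt_compat, t0_pos].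
  - change (Derive (fun s => b s) t) with (Derive b t).
    rewrite (is_derive_unique _ _ _ (b_derive t Ht)), sqrt_Ap_Am, exp_Ropp.
    assert (HAm := Am_eq). set (d := delta) in *. rewrite HAm.
    (* [field] fails unless the exponential, whose argument contains [/ t0], is named. *)
    set (E := exp (b t)) in *. set (G := exp _).
    field. repeat split; try lra. apply Rgt_not_eq. nra.
Qed.

Lemma first_integral_const t :
  t0 <= t -> first_integral t = (1 - delta) / (1 + delta).
Proof.
  intros Ht. rewrite (is_derive_0_const_from _ t0 first_integral_derive t Ht).
  unfold first_integral. rewrite b_t0, exp_0.
  replace (t0 / t0) with 1 by (field; lra).
  rewrite ln_1, Rmult_0_r, exp_0. field. assert (delta_pos := delta_pos). lra.
Qed.

Lemma bias_closed_form t :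
  t0 <= t ->
  b t = ln (((1 + delta) * exp (g t) - (1 - delta)) /
            ((1 + delta) * exp (g t) + (1 - delta))) - ln delta.
Proof.
  intros Ht. assert (delta_pos := delta_pos).
  rewrite <- (first_integral_solve delta (delta * exp (b t)) (exp (g t)));
    [| exact delta_pos | apply Rmult_lt_0_compat; [lra | apply exp_pos]
     | exact (exp_g_ge1 t Ht) | exact (first_integral_const t Ht)].
  rewrite ln_mult, ln_exp by (try apply exp_pos; lra). ring.
Qed.

Lemma bias_limit : is_lim b p_infty (Finite (- ln delta)).
Proof.
  assert (delta_pos := delta_pos).
  set (F u := ln ((1 + delta - (1 - delta) * u) / (1 + delta + (1 - delta) * u)) - ln delta).
  apply is_lim_ext_loc with (fun t => F (exp (- g t))).
  { exists t0. intros t Ht. rewrite bias_closed_form by lra. unfold F.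
    assert (HG := exp_g_ge1 t (Rlt_le _ _ Ht)).
    rewrite exp_Ropp. do 2 f_equal. field. nra. }
  replace (- ln delta) with (F 0)
    by (unfold F; rewrite Rmult_0_r, Rminus_0_r, Rplus_0_r, Rdiv_diag, ln_1 by lra; ring).
  apply is_lim_comp with (Finite 0).
  - apply is_lim_continuity, ex_derive_continuity_pt.
    unfold F. auto_derive. repeat split; try lra. apply Rdiv_lt_0_compat; lra.
  - apply is_lim_comp with m_infty; [exact is_lim_exp_m | | exists 0; discriminate].
    apply (is_lim_opp _ p_infty p_infty), is_lim_scal_ln_ratio; [|exact t0_pos].
    rewrite sqrt_Ap_Am. nra.
  - exists 0. intros t _ Hzero. injection Hzero. apply Rgt_not_eq, exp_pos.
Qed.

End BiasODE.

Theorem theorem4p4 (n N : nat) (x : nat -> nat -> R) (y : nat -> R)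
  (what wtil : nat -> R) (t0 : R) (b : R -> R) :
  (0 < N)%nat ->
  (forall i, (i < N)%nat -> y i = 1 \/ y i = -1) ->
  hard_margin_svm_bias0 n N x y what ->
  0 < t0 ->
  b t0 = 0 ->
  (forall t, t0 <= t -> is_derive b t (late_bias_velocity n N x y what wtil t (b t))) ->
  let Ap := A_plus n N x y what wtil in
  let Am := A_minus n N x y what wtil in
  let delta := sqrt (Am / Ap) in
  let g := fun t => 2 * sqrt (Ap * Am) * ln (t / t0) in
  (forall t, t0 <= t -> is_derive b t (/ t * (Ap * exp (- b t) - Am * exp (b t)))) /\
  (forall t, t0 <= t ->
     b t = ln (((1 + delta) * exp (g t) - (1 - delta)) /
               ((1 + delta) * exp (g t) + (1 - delta))) - ln delta) /\
  is_lim b p_infty (Finite (- ln delta)).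
Proof.
  intros HN Hy Hsvm Ht0 Hb0 Hvel Ap Am delta g.
  assert (Hder : forall t, t0 <= t ->
            is_derive b t (/ t * (Ap * exp (- b t) - Am * exp (b t)))).
  { intros t Ht. unfold Ap, Am.
    rewrite <- late_bias_velocity_eq by (auto; lra). apply Hvel, Ht. }
  assert (HAp : 0 < Ap) by exact (A_plus_pos n N x y Hy what wtil HN Hsvm).
  assert (HAm : 0 < Am) by exact (A_minus_pos n N x y Hy what wtil HN Hsvm).
  split; [exact Hder|]. split.
  - exact (bias_closed_form Ap Am t0 b HAp HAm Ht0 Hb0 Hder).
  - exact (bias_limit Ap Am t0 b HAp HAm Ht0 Hb0 Hder).
Qed.
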